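(* Let $N\ge 1$, $c\in\mathbb{R}$, and consider the manifold of Jacobi parameters $a_1,\dots,a_{N-1}>0$, $b_1,\dots,b_N\in\mathbb{R}$ with $\sum_{j=1}^N b_j=c$, with the Poisson bracket described in the context. Let $P_n$ and $Q_n$ be the first and second kind monic polynomials defined in the context. Then for every $n=1,\dots,N$ and all $x,y$, \[ \{P_n(x),P_n(y)\}=\{Q_n(x),Q_n(y)\}=0, \] \[ 2\{P_n(x),Q_n(y)\} = -\frac{P_n(x)Q_n(y)-P_n(y)Q_n(x)}{x-y} + Q_n(x)Q_n(y). \]
   Context: The Poisson bracket on functions of $(a_1,\dots,a_{N-1},b_1,\dots,b_N)$ is the bilinear antisymmetric bracket satisfying the Leibniz rule whose only nonzero brackets among the coordinates are $\{b_k,a_k\}=-\tfrac14 a_k$ for $k=1,\dots,N-1$ and $\{b_k,a_{k-1}\}=\tfrac14 a_{k-1}$ for $k=2,\dots,N$. Brackets of functions depending on auxiliary variables $x,y$ are computed with $x,y$ held fixed. For $b_1,\dots,b_m$ and $a_1,\dots,a_{m-1}$ let $J(b_1,\dots,b_m;a_1,\dots,a_{m-1})$ be the $m\times m$ tridiagonal symmetric matrix with diagonal $b_1,\dots,b_m$ and off-diagonal entries $a_1,\dots,a_{m-1}$. Then $P_n(x)=\det\bigl(x-J(b_1,\dots,b_n;a_1,\dots,a_{n-1})\bigr)$ and $Q_n(x)=\det\bigl(x-J(b_2,\dots,b_n;a_2,\dots,a_{n-1})\bigr)$ (so $Q_1=1$). *)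

From HB Require Import structures.
From mathcomp Require Import all_boot all_order all_algebra.
From mathcomp Require Import mpoly.
Set Implicit Arguments. Unset Strict Implicit. Unset Printing Implicit Defensive.
Import Order.TTheory GRing.Theory Num.Theory.
Local Open Scope ring_scope.

Section Jacobi.
Variables (R : realFieldType) (N : nat).

(* Coordinates: a_1..a_{N-1}, b_1..b_N, stored as the variables of
   {mpoly R[N.-1 + N]}: a_k is variable k-1, b_k is variable N-1+(k-1). *)
Definition nvars := (N.-1 + N)%N.
Notation MP := {mpoly R[nvars]}.

Definition var (j : nat) : MP :=
  if insub j is Some i then 'X_i else 0.
Definition dvar (j : nat) (f : MP) : MP :=
  if insub j is Some i then mderiv i f else 0.

Definition aidx (k : nat) : nat := k.-1.
Definition bidx (k : nat) : nat := (N.-1 + k.-1)%N.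

Definition avar (k : nat) : MP := if (0 < k < N)%N then var (aidx k) else 0.
Definition bvar (k : nat) : MP := if (0 < k <= N)%N then var (bidx k) else 0.

Definition da (k : nat) (f : MP) : MP := if (0 < k < N)%N then dvar (aidx k) f else 0.
Definition db (k : nat) (f : MP) : MP := if (0 < k <= N)%N then dvar (bidx k) f else 0.

(* The Poisson bracket: the unique antisymmetric biderivation with
   {b_k,a_k} = -1/4 a_k (1<=k<=N-1), {b_k,a_{k-1}} = 1/4 a_{k-1} (2<=k<=N),
   all other brackets of coordinates being 0:
   {f,g} = sum_{u,v coords} d_u f d_v g {u,v}. *)
Definition pbracket (f g : MP) : MP :=
  \sum_(1 <= k < N) (- (4%:R)^-1)%:MP * avar k *
      (db k f * da k g - da k f * db k g)
  + \sum_(2 <= k < N.+1) ((4%:R)^-1)%:MP * avar k.-1 *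
      (db k f * da k.-1 g - da k.-1 f * db k g).

Definition jac (s m : nat) : 'M[MP]_m :=
  \matrix_(i < m, j < m)
    if i == j :> nat then bvar (s + i).+1
    else if (i.+1 == j) || (j.+1 == i) then avar (s + minn i j).+1
    else 0.

Definition Ppoly (n : nat) (x : R) : MP := \det ((x%:MP)%:M - jac 0 n).
Definition Qpoly (n : nat) (x : R) : MP := \det ((x%:MP)%:M - jac 1 n.-1).

Definition on_manifold (c : R) (z : 'I_nvars -> R) : Prop :=
  (forall k, (0 < k < N)%N -> 0 < (avar k).@[z]) /\
  \sum_(1 <= j < N.+1) (bvar j).@[z] = c.

End Jacobi.

From HB Require Import structures.
From mathcomp Require Import all_boot all_order all_algebra.
From mathcomp Require Import mpoly.
From mathcomp Require Import ring zify.
Set Implicit Arguments. Unset Strict Implicit. Unset Printing Implicit Defensive.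
Import Order.TTheory GRing.Theory Num.Theory.
Local Open Scope ring_scope.

(* P_n and Q_n solve the three-term recurrence
     w_{k+1}(t) = (t - b_{k+1}) w_k(t) - a_k^2 w_{k-1}(t)
   (expand the tridiagonal determinants along the last row), and w_k involves
   only a_1..a_{k-1}, b_1..b_k, with dw_k/db_k = -w_{k-1}.  Hence b_{k+1} and
   a_k Poisson-commute with w_j for j <= k and j < k respectively, while
   4{a_k, w_k} = -a_k w_{k-1}.  Substituting the recurrence into both arguments
   of (x - y){u_n(x), v_n(y)} and (x - y){u_n(x), v_{n-1}(y)}, u, v in {P, Q},
   proves closed Christoffel-Darboux type forms for all eight brackets by a
   joint induction on n. *)

Section Tridiagonal.
Variable T : comPzRingType.

Definition tridiag (d e : nat -> T) m : 'M[T]_m :=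
  \matrix_(i < m, j < m)
    if i == j :> nat then d i
    else if (i.+1 == j) || (j.+1 == i) then e (minn i j) else 0.

Lemma tridiag_minor d e m :
  row' ord_max (col' ord_max (tridiag d e m.+1)) = tridiag d e m.
Proof. by apply/matrixP => i j; rewrite !mxE !lift_max. Qed.

Lemma tridiag_far d e m (i j : 'I_m) :
  (i.+1 < j)%N || (j.+1 < i)%N -> tridiag d e m i j = 0.
Proof.
rewrite mxE => far; case: eqP => [eij|_]; first lia.
by case: ifP => // /orP[] /eqP; lia.
Qed.

Lemma det_tridiagSS d e m :
  \det (tridiag d e m.+2) =
    d m.+1 * \det (tridiag d e m.+1) - e m ^+ 2 * \det (tridiag d e m).
Proof.
have sign_even k : (-1) ^+ (k + k) = 1 :> T by rewrite -signr_odd addnn odd_double.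
rewrite (expand_det_row _ ord_max) !big_ord_recr /= big1 ?add0r => [|i _]; last first.
  by rewrite tridiag_far ?mul0r //=; have := ltn_ord i; lia.
have -> : tridiag d e m.+2 ord_max ord_max = d m.+1 by rewrite mxE eqxx.
have -> : tridiag d e m.+2 ord_max (widen_ord (leqnSn m.+1) ord_max) = e m.
  by rewrite mxE /= gtn_eqF // eqxx orbT (minn_idPr (leqnSn m)).
rewrite /cofactor tridiag_minor /=.
suff -> : \det (row' ord_max (col' (widen_ord (leqnSn m.+1) ord_max) (tridiag d e m.+2)))
    = e m * \det (tridiag d e m).
  by rewrite addSn exprS !sign_even; ring.
rewrite (expand_det_col _ ord_max) big_ord_recr /= big1 ?add0r => [|i _]; last first.
  by rewrite 2!mxE tridiag_far ?mul0r //= /bump; have := ltn_ord i; lia.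
rewrite 2!mxE /cofactor sign_even mul1r; congr (_ * _).
  by rewrite mxE /= /bump !ltnn !leqnn add0n add1n ltn_eqF // eqxx (minn_idPl (leqnSn m)).
congr (\det _); apply/matrixP => i j.
have jm : (m <= j)%N = false by rewrite leqNgt ltn_ord.
by rewrite !mxE !lift_max /= /bump jm add0n jm.
Qed.

Lemma det_tridiag_rec d e (w : nat -> T) :
  w 0 = 1 -> w 1 = d 0 -> (forall k, w k.+2 = d k.+1 * w k.+1 - e k ^+ 2 * w k) ->
  forall k, \det (tridiag d e k) = w k.
Proof.
move=> w0 w1 wrec; suff dw k : \det (tridiag d e k) = w k /\ \det (tridiag d e k.+1) = w k.+1.
  by move=> k; case: (dw k).
elim: k => [|k [IHk IHk1]]; first by rewrite det_mx00 det_mx11 mxE w0 w1.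
by rewrite det_tridiagSS IHk IHk1 wrec.
Qed.

End Tridiagonal.

Section JacobiBracket.
Variables (R : realFieldType) (N : nat).
Local Notation MP := {mpoly R[nvars N]}.
Local Notation a := (avar R N).
Local Notation b := (bvar R N).
Local Notation pb := (@pbracket R N).

Lemma dvar_var i j : dvar i (var R N j) = ((i == j) && (i < nvars N)%N)%:R :> MP.
Proof.
rewrite /dvar /var; case: (@insubP _ _ (ordinal (nvars N)) i) => [i' _ ei|/negbTE ->];
  last by rewrite andbF.
case: (@insubP _ _ (ordinal (nvars N)) j) => [j' _ ej|jN]; last first.
  by rewrite mderiv0; case: eqP => // eij; rewrite -eij -ei ltn_ord in jN.
rewrite mderivX mnm1E -ei -ej (inj_eq val_inj) ltn_ord andbT.
case: eqVneq => [->|_]; last by rewrite scale0r.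
have -> : (U_(i') - U_(i'))%MM = 0%MM by apply/mnmP => k; rewrite mnmBE subnn mnm0E.
by rewrite mpolyX0 scale1r.
Qed.

Lemma dvarD i (f g : MP) : dvar i (f + g) = dvar i f + dvar i g.
Proof. by rewrite /dvar; case: insubP => *; rewrite ?mderivD ?addr0. Qed.
Lemma dvarN i (f : MP) : dvar i (- f) = - dvar i f.
Proof. by rewrite /dvar; case: insubP => *; rewrite ?mderivN ?oppr0. Qed.
Lemma dvarM i (f g : MP) : dvar i (f * g) = dvar i f * g + f * dvar i g.
Proof. by rewrite /dvar; case: insubP => *; rewrite ?mderivM ?mul0r ?mulr0 ?addr0. Qed.
Lemma dvarC i c : dvar i (c%:MP : MP) = 0.
Proof. by rewrite /dvar; case: insubP => *; rewrite ?mderivC. Qed.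
Lemma dvar0 i : dvar i (0 : MP) = 0.
Proof. by rewrite -mpolyC0 dvarC. Qed.

Lemma daD k (f g : MP) : da k (f + g) = da k f + da k g.
Proof. by rewrite /da; case: ifP; rewrite ?dvarD ?addr0. Qed.
Lemma daN k (f : MP) : da k (- f) = - da k f.
Proof. by rewrite /da; case: ifP; rewrite ?dvarN ?oppr0. Qed.
Lemma daM k (f g : MP) : da k (f * g) = da k f * g + f * da k g.
Proof. by rewrite /da; case: ifP; rewrite ?dvarM ?mul0r ?mulr0 ?addr0. Qed.
Lemma daC k c : da k (c%:MP : MP) = 0.
Proof. by rewrite /da; case: ifP; rewrite ?dvarC. Qed.

Lemma dbD k (f g : MP) : db k (f + g) = db k f + db k g.
Proof. by rewrite /db; case: ifP; rewrite ?dvarD ?addr0. Qed.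
Lemma dbN k (f : MP) : db k (- f) = - db k f.
Proof. by rewrite /db; case: ifP; rewrite ?dvarN ?oppr0. Qed.
Lemma dbM k (f g : MP) : db k (f * g) = db k f * g + f * db k g.
Proof. by rewrite /db; case: ifP; rewrite ?dvarM ?mul0r ?mulr0 ?addr0. Qed.
Lemma dbC k c : db k (c%:MP : MP) = 0.
Proof. by rewrite /db; case: ifP; rewrite ?dvarC. Qed.

Lemma avar_out k : ~~ (0 < k < N)%N -> a k = 0.
Proof. by rewrite /avar => /negbTE ->. Qed.

Lemma da_a k j : da k (a j) = ((k == j) && (0 < k < N)%N)%:R.
Proof.
rewrite /da /avar; case: ifP => hk; last by rewrite andbF.
case: ifP => hj; last by rewrite dvar0; case: eqP => // ekj; rewrite ekj hj in hk.
rewrite dvar_var /aidx /nvars; congr (_%:R).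
by rewrite (_ : (k.-1 < N.-1 + N)%N) ?andbT; [apply/eqP/eqP; lia | lia].
Qed.

Lemma db_b k j : db k (b j) = ((k == j) && (0 < k <= N)%N)%:R.
Proof.
rewrite /db /bvar; case: ifP => hk; last by rewrite andbF.
case: ifP => hj; last by rewrite dvar0; case: eqP => // ekj; rewrite ekj hj in hk.
rewrite dvar_var /bidx /nvars; congr (_%:R).
by rewrite (_ : (N.-1 + k.-1 < N.-1 + N)%N) ?andbT; [apply/eqP/eqP; lia | lia].
Qed.

Lemma da_b k j : da k (b j) = 0.
Proof.
rewrite /da /bvar; case: ifP => hk //; case: ifP => hj; rewrite ?dvar0 //.
by rewrite dvar_var /aidx /bidx; case: eqP => //= ?; lia.
Qed.

Lemma db_a k j : db k (a j) = 0.
Proof.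
rewrite /db /avar; case: ifP => hk //; case: ifP => hj; rewrite ?dvar0 //.
by rewrite dvar_var /aidx /bidx; case: eqP => //= ?; lia.
Qed.

Lemma pbracketDl (f g h : MP) : pb (f + g) h = pb f h + pb g h.
Proof.
rewrite /pbracket addrACA -!big_split /=.
by congr (_ + _); apply: eq_bigr => k _; rewrite !daD !dbD; ring.
Qed.

Lemma pbracketNl (f h : MP) : pb (- f) h = - pb f h.
Proof.
rewrite /pbracket opprD -!sumrN.
by congr (_ + _); apply: eq_bigr => k _; rewrite !daN !dbN; ring.
Qed.

Lemma pbracketMl (f g h : MP) : pb (f * g) h = f * pb g h + g * pb f h.
Proof.
rewrite /pbracket !mulrDr !mulr_sumr addrACA -!big_split /=.
by congr (_ + _); apply: eq_bigr => k _; rewrite !daM !dbM; ring.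
Qed.

Lemma pbracketCl c (h : MP) : pb c%:MP h = 0.
Proof. by rewrite /pbracket !big1 ?addr0 // => k _; rewrite !daC !dbC; ring. Qed.

Lemma pbracket_antisym (f g : MP) : pb g f = - pb f g.
Proof.
rewrite /pbracket opprD -!sumrN.
by congr (_ + _); apply: eq_bigr => k _; ring.
Qed.

Lemma pbracketxx (f : MP) : pb f f = 0.
Proof.
by rewrite /pbracket !big1 ?addr0 // => k _; rewrite [db k f * _]mulrC subrr mulr0.
Qed.

Local Notation q4 := (((4%:R : R)^-1)%:MP : MP).

Lemma pbracket_b j g : pb (b j) g = q4 * (a j.-1 * da j.-1 g - a j * da j g).
Proof.
rewrite /pbracket.
transitivity (\sum_(1 <= k < N | k == j) (- q4 * a k * da k g)
  + \sum_(2 <= k < N.+1 | k == j) (q4 * a k.-1 * da k.-1 g)).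
  congr (_ + _); rewrite [RHS]big_mkcond; apply: eq_big_nat => k kN;
  (have kb : (0 < k <= N)%N by lia);
  by rewrite !da_b !db_b; case: eqVneq => _ /=; rewrite ?kb /=; ring.
rewrite !big_nat1_eq; case: ifP => [_|/negbT/avar_out->];
  by case: ifP => [_|j2]; [ring | rewrite [a j.-1]avar_out; [ring | lia]].
Qed.

Lemma pbracket_a j g : pb (a j) g = q4 * (a j * (db j g - db j.+1 g)).
Proof.
rewrite /pbracket.
transitivity (\sum_(1 <= k < N | k == j) (q4 * a k * db k g)
  + \sum_(2 <= k < N.+1 | k == j.+1) (- q4 * a k.-1 * db k g)); last first.
  rewrite !big_nat1_eq ltnS; case: ifP => [_|/negbT/avar_out->]; ring.
congr (_ + _); rewrite [RHS]big_mkcond; apply: eq_big_nat => k kN; rewrite !da_a !db_a.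
- by case: eqVneq => _ /=; rewrite ?kN /=; ring.
- rewrite (_ : (k.-1 == j) = (k == j.+1)); last by apply/eqP/eqP; lia.
  case: eqVneq => [ekj|_] /=; last ring.
  by rewrite (_ : (0 < k.-1 < N)%N) /=; [ring | lia].
Qed.

Definition pb4 (f g : MP) : MP := 4%:R * pb f g.

Lemma pb4_b j g : pb4 (b j) g = a j.-1 * da j.-1 g - a j * da j g.
Proof.
by rewrite /pb4 pbracket_b mulrA -mpolyC_nat -mpolyCM mulfV ?pnatr_eq0 // mul1r.
Qed.

Lemma pb4_a j g : pb4 (a j) g = a j * (db j g - db j.+1 g).
Proof.
by rewrite /pb4 pbracket_a mulrA -mpolyC_nat -mpolyCM mulfV ?pnatr_eq0 // mul1r.
Qed.

Lemma pb4Dl (f g h : MP) : pb4 (f + g) h = pb4 f h + pb4 g h.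
Proof. by rewrite /pb4 pbracketDl mulrDr. Qed.
Lemma pb4Nl (f h : MP) : pb4 (- f) h = - pb4 f h.
Proof. by rewrite /pb4 pbracketNl mulrN. Qed.
Lemma pb4Ml (f g h : MP) : pb4 (f * g) h = f * pb4 g h + g * pb4 f h.
Proof. by rewrite /pb4 pbracketMl; ring. Qed.
Lemma pb4Cl c (h : MP) : pb4 c%:MP h = 0.
Proof. by rewrite /pb4 pbracketCl mulr0. Qed.
Lemma pb4_antisym (f g : MP) : pb4 g f = - pb4 f g.
Proof. by rewrite /pb4 pbracket_antisym mulrN. Qed.

Lemma pb4Dr (f g h : MP) : pb4 h (f + g) = pb4 h f + pb4 h g.
Proof. by rewrite pb4_antisym pb4Dl opprD -!pb4_antisym. Qed.
Lemma pb4Nr (f h : MP) : pb4 h (- f) = - pb4 h f.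
Proof. by rewrite pb4_antisym pb4Nl opprK -pb4_antisym. Qed.
Lemma pb4Mr (f g h : MP) : pb4 h (f * g) = f * pb4 h g + g * pb4 h f.
Proof. by rewrite pb4_antisym pb4Ml (pb4_antisym g h) (pb4_antisym f h); ring. Qed.
Lemma pb4Cr c (h : MP) : pb4 h c%:MP = 0.
Proof. by rewrite pb4_antisym pb4Cl oppr0. Qed.

Lemma pb4_bb i j : pb4 (b i) (b j) = 0.
Proof. by rewrite pb4_b !da_b !mulr0 subrr. Qed.

Lemma pb4_aa i j : pb4 (a i) (a j) = 0.
Proof. by rewrite pb4_a !db_a subrr mulr0. Qed.

Lemma pb4_ba n : pb4 (b n.+1) (a n) = a n.
Proof.
rewrite pb4_b !da_a /= eqxx (_ : (n.+1 == n) = false) ?mulr0 ?subr0 /=; last lia.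
by case: (boolP (0 < n < N)%N) => [_|/avar_out ->]; rewrite ?mulr1 ?mul0r.
Qed.

Definition jacobi_rec (w : nat -> R -> MP) := forall m t,
  w m.+2 t = (t%:MP - b m.+2) * w m.+1 t - a m.+1 ^+ 2 * w m t.

Definition adapted (w : nat -> R -> MP) k := forall t,
  [/\ forall j, (k <= j)%N -> da j (w k t) = 0,
      forall j, (k < j)%N -> db j (w k t) = 0 &
      (0 < k <= N)%N -> db k (w k t) = - w k.-1 t].

Lemma jacobi_rec_adapted w :
  jacobi_rec w -> adapted w 0 -> adapted w 1 -> forall k, adapted w k.
Proof.
move=> wrec w0 w1; suff wk : forall k, adapted w k /\ adapted w k.+1 by move=> k; case: (wk k).
elim=> [|k [IH0 IH1]]; first by [].
split=> // t; have [da0 db0 _] := IH0 t; have [da1 db1 _] := IH1 t.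
rewrite wrec expr2; split=> [j jk|j jk|kN].
- rewrite !(daD, daN, daM, daC, da_b) !da_a da1 ?da0 ?(gtn_eqF jk) /=;
    first ring; lia.
- rewrite !(dbD, dbN, dbM, dbC, db_a) !db_b db1 ?db0 ?(gtn_eqF jk) /=;
    first ring; lia.
- rewrite !(dbD, dbN, dbM, dbC, db_a) !db_b db1 ?db0 // eqxx kN /=; ring.
Qed.

Section AdaptedBrackets.
Variables (w : nat -> R -> MP) (w_adapted : forall k, adapted w k).

Lemma pb4_b_adapted k n t : (k <= n)%N -> pb4 (b n.+1) (w k t) = 0.
Proof.
move=> kn; have [da_w _ _] := w_adapted k t.
by rewrite pb4_b /= !da_w ?mulr0 ?subrr //; lia.
Qed.

Lemma pb4_a_adapted k n t : (k < n)%N -> pb4 (a n) (w k t) = 0.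
Proof.
move=> kn; have [_ db_w _] := w_adapted k t.
by rewrite pb4_a !db_w ?subrr ?mulr0 //; lia.
Qed.

Lemma pb4_a_diag n t : (0 < n)%N -> pb4 (a n) (w n t) = - a n * w n.-1 t.
Proof.
move=> n0; have [_ db_w db_wn] := w_adapted n t.
rewrite pb4_a (db_w n.+1) // subr0.
have [nN|nN] := boolP (n < N)%N; last by rewrite avar_out ?oppr0 ?mul0r //; lia.
by rewrite db_wn ?mulrN ?mulNr //; lia.
Qed.

End AdaptedBrackets.

Section BracketRecursion.
Variables (u v : nat -> R -> MP).
Hypotheses (u_adapted : forall k, adapted u k) (v_adapted : forall k, adapted v k).
Hypotheses (u_rec : jacobi_rec u) (v_rec : jacobi_rec v).
Variables (x y : R) (m : nat).
Local Notation dxy := (x%:MP - y%:MP : MP).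
Local Notation A := (a m.+1).
Local Notation B := (b m.+2).

Lemma pb4_rec_sub e1 e2 :
  dxy * pb4 (u m.+1 x) (v m.+1 y) = e1 ->
  dxy * pb4 (u m x) (v m.+1 y) = e2 ->
  dxy * pb4 (u m.+2 x) (v m.+1 y) =
    (x%:MP - B) * e1 + 2%:R * dxy * A ^+ 2 * u m x * v m y - A ^+ 2 * e2.
Proof.
move=> <- <-; rewrite u_rec expr2 !(pb4Dl, pb4Nl, pb4Ml, pb4Cl).
by rewrite (pb4_b_adapted v_adapted) // (pb4_a_diag v_adapted) //=; ring.
Qed.

(* The right-hand side is what expanding v_{m+2}(y) by the recurrence gives,
   using 4{b_{m+2}, u_{m+2}(x)} = -2 a_{m+1}^2 u_m(x) and
   4{a_{m+1}, u_{m+2}(x)} = a_{m+1} (u_{m+1}(x) - (x - b_{m+2}) u_m(x)). *)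
Lemma pb4_rec_diag e1 e2 e3 e4 :
  dxy * pb4 (u m.+1 x) (v m.+1 y) = e1 ->
  dxy * pb4 (u m x) (v m.+1 y) = e2 ->
  dxy * pb4 (u m.+1 x) (v m y) = e3 ->
  dxy * pb4 (u m x) (v m y) = e4 ->
  dxy * pb4 (u m.+2 x) (v m.+2 y) =
    (y%:MP - B) * ((x%:MP - B) * e1 + 2%:R * dxy * A ^+ 2 * u m x * v m y - A ^+ 2 * e2)
    - 2%:R * dxy * A ^+ 2 * u m x * v m.+1 y
    - A ^+ 2 * ((x%:MP - B) * e3 - A ^+ 2 * e4)
    - 2%:R * dxy * A ^+ 2 * v m y * ((x%:MP - B) * u m x - u m.+1 x).
Proof.
move=> <- <- <- <-; rewrite u_rec v_rec expr2.
rewrite !(pb4Dl, pb4Nl, pb4Ml, pb4Cl, pb4Dr, pb4Nr, pb4Mr, pb4Cr).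
rewrite (pb4_antisym B (u m.+1 x)) (pb4_antisym A (u m.+1 x)).
rewrite (pb4_antisym B (u m x)) (pb4_antisym A (u m x)).
rewrite ?(pb4_b_adapted v_adapted) ?(pb4_b_adapted u_adapted) //.
rewrite ?(pb4_a_diag v_adapted) ?(pb4_a_diag u_adapted) //.
rewrite ?(pb4_a_adapted v_adapted) ?(pb4_a_adapted u_adapted) //=.
by rewrite pb4_bb pb4_aa (pb4_antisym B A) pb4_ba; ring.
Qed.

End BracketRecursion.

Fixpoint recseq (u0 u1 : R -> MP) n t : MP :=
  match n with
  | 0 => u0 t
  | 1 => u1 t
  | S ((S m) as m1) => (t%:MP - b m1.+1) * recseq u0 u1 m1 t - a m1 ^+ 2 * recseq u0 u1 m t
  end.

Definition Pseq := recseq (fun _ => 1%:MP) (fun t => t%:MP - b 1).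
Definition Qseq := recseq (fun _ => 0%:MP) (fun _ => 1%:MP).
Definition PQseq (i : bool) := if i then Pseq else Qseq.

Lemma Pseq_adapted : (0 < N)%N -> forall k, adapted Pseq k.
Proof.
move=> N0; apply: jacobi_rec_adapted => [|t|t]; rewrite /Pseq //=.
  by split=> // j _; rewrite ?daC ?dbC.
split=> [j _|j j1|_]; rewrite ?(daD, daN, daC, da_b, dbD, dbN, dbC) ?db_b ?subrr //.
  by rewrite (gtn_eqF j1) subrr.
by rewrite eqxx N0 sub0r.
Qed.

Lemma Qseq_adapted k : adapted Qseq k.
Proof.
apply: jacobi_rec_adapted k => [|t|t]; rewrite /Qseq //=.
  by split=> // j _; rewrite ?daC ?dbC.
by split=> [j _|j _|_]; rewrite ?daC ?dbC ?oppr0.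
Qed.

Lemma PQseq_adapted i : (0 < N)%N -> forall k, adapted (PQseq i) k.
Proof. by case: i => N0 k; [exact: Pseq_adapted | exact: Qseq_adapted]. Qed.

Lemma PseqSS n t : Pseq n.+2 t = (t%:MP - b n.+2) * Pseq n.+1 t - a n.+1 ^+ 2 * Pseq n t.
Proof. by []. Qed.

Lemma QseqSS n t : Qseq n.+2 t = (t%:MP - b n.+2) * Qseq n.+1 t - a n.+1 ^+ 2 * Qseq n t.
Proof. by []. Qed.

Lemma PQseq_rec i : jacobi_rec (PQseq i).
Proof. by case: i => n t; rewrite /= (PseqSS, QseqSS). Qed.

Definition diag_value (i j : bool) n x y : MP :=
  let dxy := x%:MP - y%:MP in
  match i, j with
  | true, false =>
      2%:R * (Qseq n x * Pseq n y - Pseq n x * Qseq n y + dxy * Qseq n x * Qseq n y)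
  | false, true =>
      2%:R * (Pseq n x * Qseq n y - Qseq n x * Pseq n y - dxy * Qseq n x * Qseq n y)
  | _, _ => 0
  end.

Definition subdiag_value (i j : bool) n x y : MP :=
  let dxy := x%:MP - y%:MP in
  match i, j with
  | true, true =>
      2%:R * (Pseq n x * Pseq n.-1 y - Pseq n.-1 x * Pseq n y - dxy * Pseq n.-1 x * Pseq n.-1 y)
  | true, false =>
      2%:R * (Qseq n x * Pseq n.-1 y - Pseq n.-1 x * Qseq n y
              + dxy * (Qseq n x * Qseq n.-1 y - Pseq n.-1 x * Qseq n.-1 y))
  | false, true =>
      2%:R * (Pseq n x * Qseq n.-1 y - Qseq n.-1 x * Pseq n y
              - dxy * (Qseq n x * Qseq n.-1 y + Qseq n.-1 x * Pseq n.-1 y))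
  | false, false =>
      2%:R * (Qseq n x * Qseq n.-1 y - Qseq n.-1 x * Qseq n y - dxy * Qseq n.-1 x * Qseq n.-1 y)
  end.

Definition diag_law n := forall i j x y,
  (x%:MP - y%:MP) * pb4 (PQseq i n x) (PQseq j n y) = diag_value i j n x y.

Definition subdiag_law n := forall i j x y,
  (x%:MP - y%:MP) * pb4 (PQseq i n x) (PQseq j n.-1 y) = subdiag_value i j n x y.

Lemma pb4_swap (f g e : MP) x y :
  (y%:MP - x%:MP) * pb4 g f = e -> (x%:MP - y%:MP) * pb4 f g = e.
Proof. by move=> <-; rewrite (pb4_antisym f g); ring. Qed.

Lemma bracket_laws m : (0 < N)%N -> [/\ diag_law m, subdiag_law m.+1 & diag_law m.+1].
Proof.
move=> N0; have PQ_adapted i := PQseq_adapted i N0.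
elim: m => [|m [diag0 sub1 diag1]].
  split=> i j x y; case: i; case: j; rewrite /= /Pseq /Qseq /=;
  by rewrite ?(pb4Dl, pb4Nl, pb4Cl, pb4Dr, pb4Nr, pb4Cr) ?pb4_bb; ring.
split=> // i j x y.
- rewrite (pb4_rec_sub (PQ_adapted j) (PQseq_rec i) (diag1 i j x y) (pb4_swap (sub1 j i y x))).
  by case: i; case: j; rewrite /= ?PseqSS ?QseqSS; ring.
- rewrite (pb4_rec_diag (PQ_adapted i) (PQ_adapted j) (PQseq_rec i) (PQseq_rec j)
    (diag1 i j x y) (pb4_swap (sub1 j i y x)) (sub1 i j x y) (diag0 i j x y)).
  by case: i; case: j; rewrite /= ?PseqSS ?QseqSS; ring.
Qed.

Lemma diag_law_holds n : (0 < N)%N -> diag_law n.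
Proof. by case/(bracket_laws n). Qed.

Lemma jac_tridiag s n x :
  (x%:MP)%:M - jac R N s n = tridiag (fun i => x%:MP - b (s + i).+1) (fun i => - a (s + i).+1) n.
Proof.
apply/matrixP => i j; rewrite !mxE.
case: (eqVneq i j) => [->|ij]; first by rewrite eqxx mulr1n.
by rewrite (inj_eq val_inj) (negbTE ij) mulr0n sub0r; case: ifP; rewrite ?oppr0.
Qed.

Lemma PpolyE n x : Ppoly N n x = Pseq n x.
Proof.
rewrite /Ppoly jac_tridiag /=; apply: (det_tridiag_rec (w := Pseq^~ x)) => [|//|k].
- by rewrite /Pseq /= mpolyC1.
- by rewrite PseqSS !add0n; ring.
Qed.

Lemma QpolyE n x : Qpoly N n.+1 x = Qseq n.+1 x.
Proof.
rewrite /Qpoly jac_tridiag /=; apply: (det_tridiag_rec (w := fun k => Qseq k.+1 x)) => [|//|k].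
- by rewrite /Qseq /= mpolyC1.
- by rewrite QseqSS /Qseq /=; ring.
- by rewrite QseqSS !add1n; ring.
Qed.

Lemma pbracket_of_pb4 x y (f g e : MP) :
  x != y -> (x%:MP - y%:MP) * pb4 f g = e -> pb f g = ((4%:R * (x - y))^-1)%:MP * e.
Proof.
move=> xy <-; rewrite /pb4 !mulrA -mpolyCB -mpolyC_nat -!mpolyCM.
suff -> : (4%:R * (x - y))^-1 * (x - y) * 4%:R = 1 :> R by rewrite mpolyC1 mul1r.
by field; rewrite subr_eq0.
Qed.

Lemma pbracket_PQseq_same i n x y : (0 < N)%N -> pb (PQseq i n x) (PQseq i n y) = 0.
Proof.
move=> N0; have [<-|xy] := eqVneq x y; first exact: pbracketxx.
by rewrite (pbracket_of_pb4 xy (diag_law_holds n N0 i i x y)); case: i; rewrite mulr0.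
Qed.

End JacobiBracket.

Theorem theorem2p4 (R : realFieldType) (N : nat) (c : R) (n : nat)
  (hN : (1 <= N)%N) (hn : (1 <= n <= N)%N)
  (z : 'I_(nvars N) -> R) (hz : on_manifold c z) (x y : R) :
  (pbracket (Ppoly N n x) (Ppoly N n y)).@[z] = 0 /\
  (pbracket (Qpoly N n x) (Qpoly N n y)).@[z] = 0 /\
  (x != y ->
   2%:R * (pbracket (Ppoly N n x) (Qpoly N n y)).@[z] =
     - (((Ppoly N n x).@[z] * (Qpoly N n y).@[z]
          - (Ppoly N n y).@[z] * (Qpoly N n x).@[z]) / (x - y))
     + (Qpoly N n x).@[z] * (Qpoly N n y).@[z]).
Proof.
(* The identities hold in the polynomial ring itself. *)
case: n hn => [//|n] _; rewrite !PpolyE !QpolyE.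
rewrite (pbracket_PQseq_same true) // (pbracket_PQseq_same false) // meval0.
split=> //; split=> // xy.
rewrite (pbracket_of_pb4 xy (diag_law_holds n.+1 hN true false x y)) /=.
rewrite !(mevalM, mevalB, mevalD, mevalN, mevalC, mevalMn, meval1).
by field; rewrite subr_eq0.
Qed.
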